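(* Let $G$ be a graph, let $q\ge k$ be integers, and let $X\subseteq Y\subseteq T\subseteq V(G)$. If $X$ is $(q,k)$-unbreakable in $G$ and no vertex of $Y$ is $(X,T,q+k)$-carvable, then $Y$ is $(q+k,k)$-unbreakable in $G$.
   Context: A vertex cut of $G$ is an ordered pair $(L,R)$ with $L\cup R=V(G)$, $L\setminus R,R\setminus L\ne\emptyset$ and no edge between $L\setminus R$ and $R\setminus L$; its size is $|L\cap R|$. A set $Z$ is $(q,k)$-unbreakable in $G$ if every vertex cut of size at most $k$ has $|L\cap Z|\le q$ or $|R\cap Z|\le q$. The torso $H_T$ of $T$ in $G$ is the graph with vertex set $T$ and an edge $\{u,v\}$ ($u,v\in T$) whenever $\{u,v\}\in E(G)$ or $u,v\in N_G(D)$ for some connected component $D$ of $G\setminus T$. For $X\subseteq T$ and an integer $k'$, an $(X,T,k')$-witness is a vertex cut $(L,R)$ of $G$ with $|L\cap R|\le k'$, $|L\cap T|>|L\cap R|$, and $X\subseteq R$; it is connected if $H_T[(L\setminus R)\cap T]$ is connected. A vertex $v$ is $(X,T,k')$-carvable if there is a connected $(X,T,k')$-witness $(L,R)$ with $v\in L\setminus R$. *)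

(* A (simple, finite) graph is a symmetric irreflexive
   relation e on a finite vertex type V. *)
From mathcomp Require Import all_boot all_order all_algebra.
From Stdlib Require Import Relation_Operators.
Set Implicit Arguments. Unset Strict Implicit. Unset Printing Implicit Defensive.
Import GRing.Theory Num.Theory.

Section Defs.
Variables (V : finType) (e : rel V).

Definition vertex_cut (L R : {set V}) : Prop :=
  [/\ L :|: R = [set: V], L :\: R != set0, R :\: L != set0 &
      forall x y, x \in L :\: R -> y \in R :\: L -> ~~ e x y].

Definition cut_size (L R : {set V}) : nat := #|L :&: R|.

Definition unbreakable (q k : int) (Z : {set V}) : Prop :=
  forall L R : {set V}, vertex_cut L R -> ((cut_size L R)%:Z <= k)%R ->
    (#|L :&: Z|%:Z <= q)%R \/ (#|R :&: Z|%:Z <= q)%R.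

Definition induced (S : {set V}) (r : rel V) : rel V :=
  [rel x y | [&& x \in S, y \in S & r x y]].

Definition component_outside (T D : {set V}) : Prop :=
  exists2 x, x \in ~: T & D = [set y | connect (induced (~: T) e) x y].

Definition nbhd (D : {set V}) : {set V} :=
  [set u | (u \notin D) && [exists d in D, e u d]].

Definition torso_adj (T : {set V}) (u v : V) : Prop :=
  [/\ u \in T, v \in T, u != v &
      e u v \/ exists D, component_outside T D /\ u \in nbhd D /\ v \in nbhd D].

Definition torso_connected (T S : {set V}) : Prop :=
  forall u v, u \in S -> v \in S ->
    clos_refl_trans_1n V (fun a b => [/\ a \in S, b \in S & torso_adj T a b]) u v.

Definition witness (X T : {set V}) (k' : int) (L R : {set V}) : Prop :=
  [/\ vertex_cut L R, ((cut_size L R)%:Z <= k')%R,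
      (cut_size L R < #|L :&: T|)%N & X \subset R].

Definition connected_witness (X T : {set V}) (k' : int) (L R : {set V}) : Prop :=
  witness X T k' L R /\ torso_connected T ((L :\: R) :&: T).

Definition carvable (X T : {set V}) (k' : int) (v : V) : Prop :=
  exists L R : {set V}, connected_witness X T k' L R /\ v \in L :\: R.

End Defs.

(* Suppose a cut (L, R) of order at most k had more than q + k vertices of Y
   on each side.  As X is (q,k)-unbreakable, one side, say L, contains at most
   q vertices of X; adding them to the separator yields a cut (L, R') of order
   at most q + k with X inside R' which is heavy: its separator has fewer
   vertices outside T than L \ R' has vertices of Y.  As Y is inside T, a heavy
   cut has order less than |L ∩ T|, so it is an (X,T,q+k)-witness, and when
   the torso of T is connected on (L \ R') ∩ T every vertex of Y in L \ R'
   is carvable.  Otherwise split (L \ R') ∩ T into a torso-closed part C and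
   its complement.  C, together with the vertices outside T whose component of
   G - T attaches to C, is the strict side of a smaller cut whose separator is
   the neighbourhood of that region inside the old separator.  The separators
   obtained from C and from its complement share no vertex outside T, since such
   a vertex would make C adjacent to its complement in the torso; hence one of
   the two smaller cuts is heavy again, and we conclude by induction on
   |L \ R|. *)

From mathcomp Require Import all_boot all_order all_algebra zify.
From Stdlib Require Import Relation_Operators.
Import Order.TTheory.
Set Implicit Arguments. Unset Strict Implicit. Unset Printing Implicit Defensive.

Section Carving.
Variables (V : finType) (e : rel V).
Hypotheses (e_sym : symmetric e) (e_irr : irreflexive e).
Variable T : {set V}.

Definition comp_outside (x : V) : {set V} := [set y | connect (induced (~: T) e) x y].

Lemma induced_outside_sym : symmetric (induced (~: T) e).
Proof. by move=> x y; rewrite /induced /= (e_sym x y) andbCA. Qed.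

Lemma mem_comp_outside x : x \in comp_outside x.
Proof. by rewrite inE connect0. Qed.

Lemma comp_outside_edge x y : x \notin T -> y \notin T -> e x y ->
  comp_outside y = comp_outside x.
Proof.
move=> xT yT exy; apply/setP => z; rewrite !inE.
have cxy : connect (induced (~: T) e) x y.
  by apply: connect1; rewrite /induced /= !inE xT yT.
by rewrite (same_connect (sym_connect_sym induced_outside_sym) cxy).
Qed.

Lemma comp_outside_notT x y : x \notin T -> y \in comp_outside x -> y \notin T.
Proof.
move=> xT; rewrite inE => cxy.
have clT : closed (induced (~: T) e) (~: T) by move=> a b /and3P [-> -> _].
by have := closed_connect clT cxy; rewrite !inE xT => <-.
Qed.

Lemma comp_outside_component x : x \notin T -> component_outside e T (comp_outside x).
Proof. by move=> xT; exists x; rewrite ?inE. Qed.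

Lemma nbhd_comp_outside x c d : x \notin T -> c \in T -> d \in comp_outside x ->
  e c d -> c \in nbhd e (comp_outside x).
Proof.
move=> xT cT dx ecd; rewrite inE; apply/andP; split.
  by apply: contraL cT => /(comp_outside_notT xT).
by apply/existsP; exists d; rewrite dx.
Qed.

Definition torso_adjb (u v : V) : bool :=
  [&& u \in T, v \in T, u != v & e u v ||
    [exists x in ~: T, (u \in nbhd e (comp_outside x)) && (v \in nbhd e (comp_outside x))]].

Lemma torso_adjbC u v : torso_adjb u v = torso_adjb v u.
Proof.
rewrite /torso_adjb andbCA eq_sym (e_sym u v); do 3!congr andb; congr orb.
by apply: eq_existsb => x; congr andb; apply: andbC.
Qed.

Lemma torso_adjbW u v : torso_adjb u v -> torso_adj e T u v.
Proof.
case/and4P => uT vT uv /orP [euv | /exists_inP [x xT /andP [uN vN]]]; split => //.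
  by left.
right; exists (comp_outside x); split => //.
by apply: comp_outside_component; rewrite inE in xT.
Qed.

Lemma torso_adjb_nbhd x u v : x \notin T -> u \in T -> v \in T -> u != v ->
  u \in nbhd e (comp_outside x) -> v \in nbhd e (comp_outside x) -> torso_adjb u v.
Proof.
move=> xT uT vT uv uN vN; rewrite /torso_adjb uT vT uv /=; apply/orP; right.
by apply/exists_inP; exists x; rewrite ?in_setC ?uN ?vN.
Qed.

Definition torso_rel (S : {set V}) : rel V :=
  [rel a b | [&& a \in S, b \in S & torso_adjb a b]].

Lemma torso_rel_sym S : symmetric (torso_rel S).
Proof. by move=> a b; rewrite /torso_rel /= torso_adjbC andbCA. Qed.

Lemma connect_torso_connected (S : {set V}) :
  {in S &, forall u v, connect (torso_rel S) u v} -> torso_connected e T S.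
Proof.
move=> conn u v uS vS; have /connectP [p pth ->] := conn u v uS vS.
elim: p u uS pth {vS} => [|w p IH] u uS /=; first by constructor.
case/andP => /and3P [_ wS uw] pth.
by apply: rt1n_trans (IH w wS pth); split => //; apply: torso_adjbW.
Qed.

Definition torso_closed (A C : {set V}) : Prop :=
  {in A &, forall a b, torso_adjb a b -> (a \in C) = (b \in C)}.

Lemma torso_closedD A C : torso_closed A C -> torso_closed A (A :\: C).
Proof. by move=> clC a b aA bA ab; rewrite !in_setD aA bA (clC a b aA bA ab). Qed.

Lemma torso_closed_connect A v : torso_closed A [set w in A | connect (torso_rel A) v w].
Proof.
move=> a b aA bA ab; rewrite !inE aA bA /=.
apply: same_connect_r; first exact/sym_connect_sym/torso_rel_sym.
by apply: connect1; rewrite /torso_rel /= aA bA.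
Qed.

Variables (X Y : {set V}) (k' : int).
Hypothesis YT : Y \subset T.

Definition heavy_cut (L R : {set V}) : Prop :=
  [/\ vertex_cut e L R, ((cut_size L R)%:Z <= k')%R, X \subset R &
      #|(L :&: R) :\: T| < #|(L :\: R) :&: Y|].

Section Region.
Variables L R : {set V}.
Local Notation A := ((L :\: R) :&: T).

Definition region (C : {set V}) : {set V} :=
  C :|: [set w in (L :\: R) :\: T | [exists c in C, c \in nbhd e (comp_outside w)]].

Definition frontier (C : {set V}) : {set V} :=
  [set s in L :&: R | [exists z in region C, e z s]].

Lemma frontier_sub (C : {set V}) : frontier C \subset L :&: R.
Proof. by apply/subsetP => s; rewrite inE => /andP []. Qed.

Lemma region_attached (C : {set V}) z s :
  C \subset T -> z \in region C -> e z s -> s \notin T ->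
  exists2 c, c \in C & c \in nbhd e (comp_outside s).
Proof.
move=> CT; rewrite in_setU => /orP [zC ezs sT | ].
  by exists z => //; apply: nbhd_comp_outside (subsetP CT z zC) (mem_comp_outside s) ezs.
rewrite inE in_setD => /andP [/andP [zT _] /exists_inP [c cC cN]] ezs sT.
by exists c; rewrite // (comp_outside_edge zT sT ezs).
Qed.

Section Closed.
Variable C : {set V}.
Hypotheses (CA : C \subset A) (C_closed : torso_closed A C).

Let CT : C \subset T := subset_trans CA (subsetIr _ _).

Lemma region_sub : region C \subset L :\: R.
Proof.
apply/subsetP => z; rewrite in_setU => /orP [/(subsetP CA) | ].
  by rewrite in_setI => /andP [].
by rewrite inE in_setD => /andP [/andP [_ ->]].
Qed.

Lemma region_setIT : region C :&: T = C.
Proof.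
apply/setP => z; rewrite in_setI in_setU [z \in [set _ in _ | _]]inE in_setD.
case zT: (z \in T); rewrite ?andbT ?andbF /= ?orbF //.
by apply/esym/negbTE; apply: contraFN zT; apply: (subsetP CT).
Qed.

Lemma region_edge x y : x \in region C -> y \in L :\: R -> e x y -> y \in region C.
Proof.
move=> xZ yLR exy; case: (boolP (y \in T)) => yT; last first.
  have [c cC cN] := region_attached CT xZ exy yT.
  by rewrite in_setU inE in_setD yT yLR; apply/orP; right; apply/exists_inP; exists c.
have yA : y \in A by rewrite in_setI yLR yT.
suff yC : y \in C by rewrite in_setU yC.
have xy : x != y by apply: contraTneq exy => ->; rewrite e_irr.
case: (boolP (x \in C)) => xC.
  by rewrite -(C_closed (subsetP CA x xC) yA) // /torso_adjb (subsetP CT x xC) yT xy exy.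
move: xZ; rewrite in_setU (negbTE xC) inE in_setD /= => /andP [/andP [xT _]].
case/exists_inP => c cC cN.
have yN : y \in nbhd e (comp_outside x).
  by apply: nbhd_comp_outside xT yT (mem_comp_outside x) _; rewrite e_sym.
have [<- // | cy] := eqVneq c y.
rewrite -(C_closed (subsetP CA c cC) yA) //.
exact: torso_adjb_nbhd xT (subsetP CT c cC) yT cy cN yN.
Qed.

Lemma region_cut_diff : (region C :|: frontier C) :\: ~: region C = region C.
Proof. by rewrite setDE setCK setUK. Qed.

Lemma region_cut_inter : (region C :|: frontier C) :&: ~: region C = frontier C.
Proof.
rewrite setIUl setICr set0U; apply/setIidPl/subsetP => s /(subsetP (frontier_sub C)).
rewrite in_setI in_setC => /andP [_ sR]; apply: contraTN sR => /(subsetP region_sub).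
by rewrite in_setD => /andP [].
Qed.

Lemma region_cut : vertex_cut e L R -> region C != set0 ->
  vertex_cut e (region C :|: frontier C) (~: region C).
Proof.
case=> LRT _ /set0Pn [r] + cutE Z0; rewrite in_setD => /andP [rL rR]; split.
- by rewrite setUAC setUCr setTU.
- by rewrite region_cut_diff.
- have rZ : r \notin region C.
    by apply: contraNN rL => /(subsetP region_sub); rewrite in_setD => /andP [].
  have rS : r \notin frontier C.
    by apply: contraNN rL => /(subsetP (frontier_sub C)); rewrite in_setI => /andP [].
  by apply/set0Pn; exists r; rewrite in_setD in_setU in_setC negb_or rZ rS.
move=> x y; rewrite region_cut_diff => xZ.
rewrite in_setD in_setU in_setC negb_or => /andP [/andP [yZ yS] _].
have xLR := subsetP region_sub x xZ.
apply/negP => exy; case yL: (y \in L); last first.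
  have yR : y \in R by move/setP: LRT => /(_ y); rewrite in_setU in_setT yL.
  by move: (cutE x y xLR); rewrite in_setD yL yR exy => /(_ isT).
case yR: (y \in R).
  by move/negP: yS; apply; rewrite inE in_setI yL yR; apply/exists_inP; exists x.
by move/negP: yZ; apply; apply: region_edge xZ _ exy; rewrite in_setD yL yR.
Qed.

Lemma region_heavy : heavy_cut L R -> #|frontier C :\: T| < #|C :&: Y| ->
  heavy_cut (region C :|: frontier C) (~: region C).
Proof.
case=> hcut hsz XR _ hc.
have ZY : region C :&: Y = C :&: Y by rewrite -{1}(setIidPr YT) setIA region_setIT.
split.
- apply: region_cut hcut _; have : 0 < #|region C :&: Y| by rewrite ZY (leq_ltn_trans _ hc).
  by case/card_gt0P => z /setIP [zZ _]; apply/set0Pn; exists z.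
- rewrite /cut_size region_cut_inter; apply: le_trans hsz.
  by rewrite lez_nat; apply/subset_leq_card/frontier_sub.
- apply/subsetP => x xX; rewrite in_setC; apply/negP => /(subsetP region_sub).
  by rewrite in_setD (subsetP XR x xX).
- by rewrite region_cut_inter region_cut_diff ZY.
Qed.

Lemma region_proper w : w \in A -> w \notin C ->
  #|(region C :|: frontier C) :\: ~: region C| < #|L :\: R|.
Proof.
rewrite region_cut_diff in_setI => /andP [wLR wT] wC.
apply/proper_card/properP; split; first exact: region_sub.
by exists w => //; apply: contra wC => wZ; rewrite -region_setIT in_setI wZ.
Qed.

End Closed.

Lemma frontier_disjoint (C C' : {set V}) :
  C \subset A -> C' \subset A -> torso_closed A C ->
  [disjoint C & C'] -> [disjoint frontier C :\: T & frontier C' :\: T].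
Proof.
move=> CA C'A Cclosed CC'; rewrite -setI_eq0; apply/eqP/setP => s.
rewrite in_set0 in_setI !in_setD; apply/negP => /andP [/andP [sT sF] /andP [_ sF']].
have AT : A \subset T := subsetIr _ _.
move: sF sF'; rewrite !inE => /andP [_ /exists_inP [z zZ ezs]].
move=> /andP [_ /exists_inP [z' zZ' ezs']].
have [c cC cN] := region_attached (subset_trans CA AT) zZ ezs sT.
have [c' cC' cN'] := region_attached (subset_trans C'A AT) zZ' ezs' sT.
have cc' : c != c' by apply: contraTneq cC' => <-; rewrite (disjointFr CC' cC).
have cA := subsetP CA c cC; have c'A := subsetP C'A c' cC'.
have adj := torso_adjb_nbhd sT (subsetP AT c cA) (subsetP AT c' c'A) cc' cN cN'.
by move: (Cclosed c c' cA c'A adj); rewrite cC (disjointFl CC' cC').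
Qed.

Lemma heavy_split (C : {set V}) : C \subset A -> torso_closed A C ->
  #|(L :&: R) :\: T| < #|(L :\: R) :&: Y| ->
  #|frontier C :\: T| < #|C :&: Y| \/ #|frontier (A :\: C) :\: T| < #|(A :\: C) :&: Y|.
Proof.
move=> CA Cclosed hc.
have CAC : [disjoint C & A :\: C].
  by rewrite -setI_eq0 setDE setICA setICr setI0.
have splitY : #|(L :\: R) :&: Y| = #|C :&: Y| + #|(A :\: C) :&: Y|.
  have <- : (C :&: Y) :|: ((A :\: C) :&: Y) = (L :\: R) :&: Y.
    by rewrite -setIUl -{1}(setIidPr CA) setID -setIA (setIidPr YT).
  have [_] := leq_card_setU (C :&: Y) ((A :\: C) :&: Y).
  by rewrite (disjointW (subsetIl _ _) (subsetIl _ _) CAC) => /eqP.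
have splitS : #|frontier C :\: T| + #|frontier (A :\: C) :\: T| <= #|(L :&: R) :\: T|.
  have [_] := leq_card_setU (frontier C :\: T) (frontier (A :\: C) :\: T).
  rewrite (frontier_disjoint CA (subsetDl A C) Cclosed CAC) => /eqP <-.
  by rewrite -setDUl; apply/subset_leq_card/setSD; rewrite subUset !frontier_sub.
rewrite splitY in hc; case: (ltnP #|frontier C :\: T| #|C :&: Y|) => h; [by left | right].
rewrite -(ltn_add2l #|C :&: Y|); apply: leq_ltn_trans (leq_trans _ splitS) hc.
by rewrite leq_add2r.
Qed.

End Region.

Lemma heavy_cut_witness (L R : {set V}) : heavy_cut L R -> witness e X T k' L R.
Proof.
case=> hcut hsz XR hc; split => //; rewrite /cut_size.
have sideL := cardsID R (L :&: T).
have sideLR := cardsID T (L :&: R).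
have YLR : #|(L :\: R) :&: Y| <= #|(L :&: T) :\: R|.
  apply/subset_leq_card/subsetP => z; rewrite !inE => /andP [/andP [zR zL] zY].
  by rewrite zR zL (subsetP YT z zY).
rewrite setIAC in sideL; lia.
Qed.

Lemma heavy_cut_carvable (L R : {set V}) :
  heavy_cut L R -> exists2 v, v \in Y & carvable e X T k' v.
Proof.
have [n] := ubnP #|L :\: R|; elim: n L R => // n IH L R /ltnSE hn hh.
pose A := (L :\: R) :&: T.
have [_ _ _ hc] := hh.
case: (boolP [forall u in A, forall v in A, connect (torso_rel A) u v]).
  move=> /forall_inP conn.
  have /set0Pn [y /setIP [yLR yY]] : (L :\: R) :&: Y != set0.
    by rewrite -card_gt0 (leq_ltn_trans _ hc).
  exists y => //; exists L, R; split => //; split; first exact: heavy_cut_witness.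
  by apply: connect_torso_connected => u v uA vA; apply: (forall_inP (conn u uA)).
rewrite negb_forall_in => /exists_inP [u uA].
rewrite negb_forall_in => /exists_inP [v vA nuv].
pose C := [set w in A | connect (torso_rel A) u w].
have CA : C \subset A by apply/subsetP => w; rewrite inE => /andP [].
have Cclosed : torso_closed A C := torso_closed_connect u.
have uC : u \in C by rewrite inE uA connect0.
have vC : v \notin C by rewrite inE vA.
have descend (C0 : {set V}) :
    C0 \subset A -> torso_closed A C0 -> (exists2 w, w \in A & w \notin C0) ->
    #|frontier L R C0 :\: T| < #|C0 :&: Y| -> exists2 v, v \in Y & carvable e X T k' v.
  move=> C0A C0closed [w wA wC0] hc0; apply: (IH _ _ _ (region_heavy C0A C0closed hh hc0)).
  exact: leq_trans (region_proper C0A wA wC0) hn.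
case: (heavy_split CA Cclosed hc) => hcC.
  by apply: descend CA Cclosed _ hcC; exists v.
apply: descend (subsetDl A C) (torso_closedD Cclosed) _ hcC.
by exists u; rewrite // in_setD uC.
Qed.

End Carving.

Lemma cut_sizeC (V : finType) (L R : {set V}) : cut_size L R = cut_size R L.
Proof. by rewrite /cut_size setIC. Qed.

Lemma vertex_cutC (V : finType) (e : rel V) (L R : {set V}) :
  symmetric e -> vertex_cut e L R -> vertex_cut e R L.
Proof.
move=> e_sym [LRT LR0 RL0 cutE]; split => //; first by rewrite setUC.
by move=> x y xRL yLR; rewrite e_sym; apply: cutE.
Qed.

Section Unbreakable.
Variables (V : finType) (e : rel V) (X Y T : {set V}).
Hypotheses (XT : X \subset T) (YT : Y \subset T).

Lemma heavy_cut_extend (q k : int) (L R : {set V}) :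
  vertex_cut e L R -> ((cut_size L R)%:Z <= k)%R -> (#|L :&: X|%:Z <= q)%R ->
  (q + k < #|L :&: Y|%:Z)%R -> heavy_cut e T X Y (q + k) L (R :|: (L :&: X)).
Proof.
move=> [LRT LR0 RL0 cutE] hsz hLX hLY; set R' := R :|: (L :&: X).
have LR' : L :&: R' = (L :&: R) :|: (L :&: X) by rewrite setIUr setIA setIid.
have R'L : R' :\: L = R :\: L.
  by rewrite setDUl [(L :&: X) :\: L]setDE setIAC setICr set0I setU0.
have LR'T : (L :&: R') :\: T = (L :&: R) :\: T.
  rewrite LR' setDUl (_ : (L :&: X) :\: T = set0) ?setU0 //.
  by apply/eqP; rewrite setD_eq0 (subset_trans (subsetIr L X) XT).
have heavy : #|(L :&: R') :\: T| < #|(L :\: R') :&: Y|.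
  have splitLY : #|L :&: Y| <= #|(L :\: R') :&: Y| + #|(L :&: R) :&: Y| + #|L :&: X|.
    apply: leq_trans (_ : #|((L :\: R') :&: Y :|: (L :&: R) :&: Y) :|: L :&: X| <= _).
      apply/subset_leq_card/subsetP => z; rewrite !inE.
      by case: (z \in L); case: (z \in R); case: (z \in X); case: (z \in Y).
    rewrite (leq_trans (leq_card_setU _ _).1) // leq_add2r; exact: (leq_card_setU _ _).1.
  have splitLR := cardsID Y (L :&: R).
  have notT : #|(L :&: R) :\: T| <= #|(L :&: R) :\: Y| by apply/subset_leq_card/setDS.
  rewrite LR'T; rewrite /cut_size in hsz; lia.
split => //.
- split => //; first by rewrite setUA LRT setTU.
  + have /set0Pn [y /setIP [yLR' _]] : (L :\: R') :&: Y != set0.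
      by rewrite -card_gt0 (leq_ltn_trans _ heavy).
    by apply/set0Pn; exists y.
  + by rewrite R'L.
  + by rewrite R'L => x y /(subsetP (setDS L (subsetUl R _))); apply: cutE.
- rewrite /cut_size LR'; have := (leq_card_setU (L :&: R) (L :&: X)).1.
  by rewrite /cut_size in hsz; lia.
- apply/subsetP => x xX; rewrite /R' in_setU in_setI xX andbT orbC.
  by move/setP: LRT => /(_ x); rewrite in_setU in_setT.
Qed.

Hypotheses (e_sym : symmetric e) (e_irr : irreflexive e).

Lemma cut_side_bound (q k : int) (L R : {set V}) :
  (forall v, v \in Y -> ~ carvable e X T (q + k)%R v) ->
  vertex_cut e L R -> ((cut_size L R)%:Z <= k)%R -> (#|L :&: X|%:Z <= q)%R ->
  (#|L :&: Y|%:Z <= q + k)%R.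
Proof.
move=> noncarv hcut hsz hLX; rewrite leNgt; apply/negP => hLY.
have [v vY] := heavy_cut_carvable e_sym e_irr YT (heavy_cut_extend hcut hsz hLX hLY).
exact: noncarv.
Qed.

End Unbreakable.

Theorem lemma5p5 (V : finType) (e : rel V) (e_sym : symmetric e)
    (e_irr : irreflexive e) (q k : int) (X Y T : {set V}) :
  (k <= q)%R -> X \subset Y -> Y \subset T ->
  unbreakable e q k X ->
  (forall v, v \in Y -> ~ carvable e X T (q + k)%R v) ->
  unbreakable e (q + k)%R k Y.
Proof.
move=> _ XY YT unbrX noncarv L R hcut hsz.
have XT := subset_trans XY YT.
have [hX | hX] := unbrX L R hcut hsz; [left | right].
  exact: (cut_side_bound XT YT e_sym e_irr noncarv hcut hsz hX).
apply: (cut_side_bound XT YT e_sym e_irr noncarv (vertex_cutC e_sym hcut) _ hX).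
by rewrite cut_sizeC.
Qed.
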